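(* Let $n\geq 3$ and let $S_n$ be the star graph with vertices $a_1,\dots,a_n$ and center $a_1$. For every $f:V\to\mathbb{R}$, $${\rm Var}_2 M_{S_n}f\leq \frac{\left((n-1)^2+n-2\right)^{1/2}}{n}\,{\rm Var}_2 f.$$ Moreover, the constant $\frac{((n-1)^2+n-2)^{1/2}}{n}$ is optimal, i.e. it cannot be replaced by any smaller constant.
   Context: For a finite connected graph $G=(V,E)$ with graph distance $d_G$ and $f:V\to\mathbb{R}$, $M_Gf(v)=\sup_{r\geq 0}\frac{1}{|B(v,r)|}\sum_{u\in B(v,r)}|f(u)|$, where $B(v,r)=\{u\in V: d_G(u,v)\le r\}$. For $g:V\to\mathbb{R}$ and $p>0$, ${\rm Var}_p g=\left(\sum_{\{v_1,v_2\}\in E}|g(v_1)-g(v_2)|^p\right)^{1/p}$. The star graph $S_n$ has vertex set $V=\{a_1,\dots,a_n\}$ and edges exactly between $a_1$ and each $a_i$, $i\ge 2$. *)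

From HB Require Import structures.
From mathcomp Require Import all_boot all_order all_algebra.
From mathcomp Require Import all_classical all_reals.
Set Implicit Arguments. Unset Strict Implicit. Unset Printing Implicit Defensive.
Import Order.TTheory GRing.Theory Num.Theory.
Local Open Scope ring_scope.
Local Open Scope classical_set_scope.

Fixpoint walk (V : finType) (e : rel V) (k : nat) (u w : V) : bool :=
  match k with
  | 0 => u == w
  | k'.+1 => [exists x, e u x && walk e k' x w]
  end.

(* B(v,r) = {u : d_G(u,v) <= r}, for real r >= 0;
   d_G(u,v) <= r iff there is a walk of some length k <= r from v to u *)
Definition ball (R : realType) (V : finType) (e : rel V) (v : V) (r : R)
  : {set V} :=
  [set u | `[< exists k : nat, (k%:R <= r) /\ walk e k v u >]].

Definition ball_avg (R : realType) (V : finType) (e : rel V) (f : V -> R)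
  (v : V) (r : R) : R :=
  (#|ball e v r|%:R)^-1 * \sum_(u in ball e v r) `|f u|.

Definition maxfun (R : realType) (V : finType) (e : rel V) (f : V -> R)
  (v : V) : R :=
  sup [set ball_avg e f v r | r in [set r : R | 0 <= r]].

(* Each unordered edge
   {v1,v2} is counted exactly once, via its representative ordered pair (v1,v2) with
   enum_rank v1 < enum_rank v2 (the term is symmetric in v1, v2). *)
Definition Var2 (R : realType) (V : finType) (e : rel V) (g : V -> R) : R :=
  Num.sqrt (\sum_(p : V * V | e p.1 p.2 && (enum_rank p.1 < enum_rank p.2)%N)
              `|g p.1 - g p.2| ^+ 2).

(* Star graph S_n on 'I_n: a_1 is vertex 0, edges exactly between 0 and each i <> 0. *)
Definition star (n : nat) : rel 'I_n :=
  fun i j => ((val i == 0%N) && (val j != 0%N)) || ((val j == 0%N) && (val i != 0%N)).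
Arguments star n : clear implicits.

From mathcomp Require Import all_boot all_order all_algebra.
From mathcomp Require Import all_classical all_reals.
From mathcomp Require Import ring lra.
Import Order.TTheory GRing.Theory Num.Theory.
Local Open Scope ring_scope.

Set Implicit Arguments. Unset Strict Implicit. Unset Printing Implicit Defensive.

(* Every ball of the star has radius 0, 1 or 2, so with a = |f(a_1)|, x_j the values of
   |f| at the leaves and A the mean of |f|, M f(a_1) = max(a, A) and M f at leaf j is
   max(x_j, (x_j + a)/2, A).  As ||f u| - |f v|| <= |f u - f v|, it suffices to bound
   n^2 sum_j (M f(leaf j) - M f(a_1))^2 by (n^2 - n - 1) sum_j (x_j - a)^2.  With c_j the
   positive part of x_j - max(a, A), this follows from Cauchy-Schwarz for
   v_j = (n^2 - n - 1)(x_j - a) - n^2 c_j together with sum_j c_j^2 <= (sum_j c_j)^2.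
   Equality holds for f = 1 at the centre, n at one leaf and 0 elsewhere. *)

Section StarDistance.
Variable n : nat.

Definition star_dist (v u : 'I_n) : nat :=
  if v == u then 0 else if (val v == 0) || (val u == 0) then 1 else 2.

Definition star_ball (v : 'I_n) (k : nat) : {set 'I_n} :=
  [set u | (star_dist v u <= k)%N].

Lemma star_irr (v : 'I_n) : star n v v = false.
Proof. by rewrite /star; case: (val v == 0). Qed.

Lemma star_dist_le2 (v u : 'I_n) : (star_dist v u <= 2)%N.
Proof. by rewrite /star_dist; case: ifP => //; case: ifP. Qed.

Lemma walk_star_dist_le k (v u : 'I_n) : walk (star n) k v u -> (star_dist v u <= k)%N.
Proof.
case: k => [/= /eqP -> | [|k]]; first by rewrite /star_dist eqxx.
- move=> /existsP [x /andP [vx /eqP xu]]; move: vx; rewrite {x}xu /star_dist.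
  case: eqVneq => [-> | _]; first by rewrite star_irr.
  by rewrite /star; case: (val v == 0); case: (val u == 0).
- by move=> _; apply: leq_trans (star_dist_le2 v u) _.
Qed.

Lemma walk_star_dist (v u : 'I_n) : walk (star n) (star_dist v u) v u.
Proof.
rewrite /star_dist; case: eqVneq => [-> | vu] /=; first exact: eqxx.
have /negPf vu' : val v != val u by [].
case: ifP => [v0_or_u0 | /norP [v0 u0]] /=.
  apply/existsP; exists u; rewrite eqxx andbT /star.
  by move: v0_or_u0 vu'; case: (val v =P 0) => [->|_]; case: (val u =P 0) => [->|_].
have n_gt0 : (0 < n)%N by apply: leq_ltn_trans (ltn_ord v).
apply/existsP; exists (Ordinal n_gt0); rewrite /star /= v0 orbT /=.
by apply/existsP; exists u; rewrite /star /= u0 eqxx.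
Qed.

Lemma star_ball0 (v : 'I_n) : star_ball v 0 = [set v].
Proof. by apply/setP => u; rewrite !inE /star_dist eq_sym; case: eqP => //; case: ifP. Qed.

Lemma star_ball2 (v : 'I_n) : star_ball v 2 = [set: 'I_n]%SET.
Proof. by apply/setP => u; rewrite !inE star_dist_le2. Qed.

Variable R : realType.

Lemma ball_star (v : 'I_n) (r : R) :
  ball (star n) v r = [set u | (star_dist v u)%:R <= r].
Proof.
apply/setP => u; rewrite !inE; apply/asboolP/idP => [[k [kr vu]] | vur].
  by apply: le_trans kr; rewrite ler_nat walk_star_dist_le.
by exists (star_dist v u); split => //; exact: walk_star_dist.
Qed.

Lemma ball_star_nat (v : 'I_n) k : ball (star n) v (k%:R : R) = star_ball v k.
Proof. by apply/setP => u; rewrite ball_star !inE ler_nat. Qed.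

Lemma ball_star_radius (v : 'I_n) (r : R) :
  0 <= r -> exists2 k, (k <= 2)%N & ball (star n) v r = star_ball v k.
Proof.
move=> r_ge0; rewrite ball_star.
exists (if r < 1 then 0%N else if r < 2 then 1%N else 2%N); first by case: ifP => //; case: ifP.
apply/setP => u; rewrite !inE; have := star_dist_le2 v u.
case: (star_dist v u) => [|[|[|//]]] _;
  case: ltrP => r1; try case: ltrP => r2; apply/idP/idP => //=; lra.
Qed.

End StarDistance.

Definition leaf_max (R : realFieldType) (a A x : R) : R :=
  Num.max x (Num.max ((x + a) / 2) A).

Section StarMaxfun.
Variable R : realType.

Definition mean_abs (V : finType) (f : V -> R) (S : {set V}) : R :=
  (#|S|%:R)^-1 * \sum_(u in S) `|f u|.

Lemma maxfun_star n (f : 'I_n -> R) (v : 'I_n) :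
  maxfun (star n) f v = Num.max (mean_abs f (star_ball v 0))
    (Num.max (mean_abs f (star_ball v 1)) (mean_abs f (star_ball v 2))).
Proof.
set M := Num.max _ _; rewrite /maxfun; set E := (X in sup X).
have E_mean k : E (mean_abs f (star_ball v k)).
  by exists k%:R; [rewrite /= ler0n | rewrite /ball_avg ball_star_nat].
have E_le_M : ubound E M.
  move=> _ [r r_ge0 <-]; rewrite /ball_avg; have [k k_le2 ->] := ball_star_radius v r_ge0.
  by case: k k_le2 => [|[|[|]]] // _; rewrite /M !le_max lexx ?orbT.
apply/le_anti; rewrite ge_sup //=; last by exists (mean_abs f (star_ball v 0)).
have E_le_sup := ub_le_sup (ex_intro _ M E_le_M).
by rewrite /M !ge_max !E_le_sup.
Qed.

Lemma mean_abs_set1 (V : finType) (f : V -> R) x : mean_abs f [set x] = `|f x|.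
Proof. by rewrite /mean_abs cards1 big_set1 invr1 mul1r. Qed.

Lemma mean_abs_set2 (V : finType) (f : V -> R) x y :
  x != y -> mean_abs f [set x; y] = (`|f x| + `|f y|) / 2.
Proof.
by move=> xy; rewrite /mean_abs cards2 xy big_setU1 /= ?big_set1 1?mulrC // inE.
Qed.

Variable m : nat.

Definition star_mean (f : 'I_m.+1 -> R) : R :=
  (`|f ord0| + \sum_(j < m) `|f (lift ord0 j)|) / (m%:R + 1).

Lemma mean_abs_setT_star (f : 'I_m.+1 -> R) : mean_abs f [set: 'I_m.+1] = star_mean f.
Proof.
rewrite /mean_abs /star_mean cardsT card_ord -natr1 mulrC.
by rewrite (eq_bigl xpredT) ?big_ord_recl // => u; rewrite inE.
Qed.

Lemma star_ball_center1 : star_ball (@ord0 m) 1 = [set: 'I_m.+1].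
Proof. by apply/setP => u; rewrite !inE /star_dist; case: eqP. Qed.

Lemma star_ball_leaf1 (j : 'I_m) : star_ball (lift ord0 j) 1 = [set lift ord0 j; ord0].
Proof.
apply/setP => u; rewrite !inE /star_dist [u == _]eq_sym.
by case: eqP => //= _; rewrite -val_eqE; case: (_ == _).
Qed.

Lemma maxfun_star_center (f : 'I_m.+1 -> R) :
  maxfun (star m.+1) f ord0 = Num.max `|f ord0| (star_mean f).
Proof.
by rewrite maxfun_star star_ball0 star_ball_center1 star_ball2 mean_abs_set1
  mean_abs_setT_star maxxx.
Qed.

Lemma maxfun_star_leaf (f : 'I_m.+1 -> R) j :
  maxfun (star m.+1) f (lift ord0 j) =
  leaf_max `|f ord0| (star_mean f) `|f (lift ord0 j)|.
Proof.
rewrite maxfun_star star_ball0 star_ball_leaf1 star_ball2 mean_abs_set1.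
by rewrite mean_abs_setT_star mean_abs_set2 // eq_sym neq_lift.
Qed.

Lemma Var2_star (g : 'I_m.+1 -> R) :
  Var2 (star m.+1) g = Num.sqrt (\sum_(j < m) (g (lift ord0 j) - g ord0) ^+ 2).
Proof.
rewrite /Var2; congr Num.sqrt.
rewrite -(pair_big_dep xpredT (fun i j => star _ i j && (enum_rank i < enum_rank j)%N)
  (fun i j => `|g i - g j| ^+ 2)) /= big_ord_recl /=.
rewrite [X in _ + X]big1 ?addr0 => [|i _]; last first.
  by apply: big_pred0 => j; rewrite !enum_rank_ord /star /=; case: (j : nat); rewrite ?andbF.
rewrite big_mkcond big_ord_recl /= add0r; apply: eq_bigr => j _.
by rewrite !enum_rank_ord /= -normrN opprB real_normK // num_real.
Qed.

End StarMaxfun.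

Section RealInequalities.
Variable R : realFieldType.

Lemma sqr_normB_le (x y : R) : (`|x| - `|y|) ^+ 2 <= (x - y) ^+ 2.
Proof.
rewrite -[leLHS]real_normK ?num_real // -[leRHS]real_normK ?num_real //.
by rewrite lerXn2r ?nnegrE // ler_dist_dist.
Qed.

Lemma sumr_sqr_le_sqr m (c : 'I_m -> R) :
  (forall j, 0 <= c j) -> \sum_j c j ^+ 2 <= (\sum_j c j) ^+ 2.
Proof.
move=> c_ge0; rewrite [leRHS]expr2 mulr_suml; apply: ler_sum => j _.
by rewrite expr2 ler_wpM2l // (bigD1 j) //= lerDl sumr_ge0.
Qed.

Lemma sqr_sumr_le m (v : 'I_m -> R) : (\sum_j v j) ^+ 2 <= m%:R * \sum_j v j ^+ 2.
Proof.
case: m v => [|m] v; first by rewrite !big_ord0 mul0r expr0n.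
set s := \sum_j v j; set k : R := m.+1%:R.
have k_gt0 : 0 < k by rewrite ltr0n.
have sq j : (k * v j - s) ^+ 2 = k ^+ 2 * v j ^+ 2 - 2 * k * s * v j + s ^+ 2 by ring.
have : 0 <= \sum_j (k * v j - s) ^+ 2 by apply: sumr_ge0 => j _; exact: sqr_ge0.
rewrite (eq_bigr _ (fun j _ => sq j)) !big_split sumrN /= -!mulr_sumr sumr_const card_ord -/s.
rewrite -[s *+ _]mulr_natr -/k.
have -> : k ^+ 2 * \sum_j v j ^+ 2 - 2 * k * s * s + s * (s * k) =
    k * (k * \sum_j v j ^+ 2 - s ^+ 2) by ring.
by rewrite pmulr_rge0 // subr_ge0.
Qed.

Lemma leaf_maxB_mean (a A x : R) : a < A -> leaf_max a A x - A = Num.max (x - A) 0.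
Proof.
move=> aA; rewrite /leaf_max !maxEle.
by case: (leP ((x + a) / 2) A) => ?; repeat case: leP => ?; lra.
Qed.

Lemma leaf_maxB_center (a A x : R) : A <= a ->
  (leaf_max a A x - a) ^+ 2 <=
  Num.max (x - a) 0 ^+ 2 + (a - A) / 2 * (Num.max (x - a) 0 - (x - a)).
Proof.
move=> Aa; rewrite /leaf_max !maxEle.
by case: (leP ((x + a) / 2) A) => ?; case: (leP x A) => ?;
  case: (leP x ((x + a) / 2)) => ?; case: (leP (x - a) 0) => ?; nra.
Qed.

End RealInequalities.

(* In both lemmas X = sum_j (x_j - a)^2, Y = sum_j c_j^2 and S = sum_j c_j; the second
   hypothesis is the Cauchy-Schwarz inequality of [star_gap_cauchy_schwarz]. *)
Section QuadraticBounds.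
Variables (R : realFieldType) (N : R).
Local Notation K := (N ^+ 2 - N - 1).

Lemma star_quadratic_mean_gt (X Y S d : R) : 3 <= N -> Y <= S ^+ 2 ->
  (K * N * d - N ^+ 2 * S) ^+ 2 <=
    (N - 1) * (K ^+ 2 * X - 2 * K * N ^+ 2 * (Y + d * S) + N ^+ 4 * Y) ->
  N ^+ 2 * Y <= K * X.
Proof.
set CS := (N - 1) * _ => N_ge3 YS cs.
have NK_gt0 : 0 < (N - 1) * K by apply: mulr_gt0; nra.
have N_ge0 : [/\ 0 <= N, 0 <= N - 1 & 0 <= N + 1] by split; lra.
have key : (N - 1) * K * (K * X - N ^+ 2 * Y) =
    (CS - (K * N * d - N ^+ 2 * S) ^+ 2) + N ^+ 2 * (S - K * d) ^+ 2
    + (N - 1) * N ^+ 2 * (N + 1) * (S ^+ 2 - Y) by rewrite /CS; ring.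
have cs_ge0 : 0 <= CS - (K * N * d - N ^+ 2 * S) ^+ 2 by rewrite subr_ge0.
have sq_ge0 : 0 <= N ^+ 2 * (S - K * d) ^+ 2 by rewrite mulr_ge0 ?sqr_ge0.
have YS_ge0 : 0 <= (N - 1) * N ^+ 2 * (N + 1) * (S ^+ 2 - Y).
  by case: N_ge0 => *; rewrite !mulr_ge0 // subr_ge0.
by rewrite -subr_ge0 -(pmulr_rge0 _ NK_gt0) key; do 2 apply: addr_ge0 => //.
Qed.

Lemma star_quadratic_mean_le (X Y S e : R) :
  3 <= N -> 0 <= e -> 0 <= S -> Y <= S ^+ 2 ->
  (K * N * e + N ^+ 2 * S) ^+ 2 <=
    (N - 1) * (K ^+ 2 * X - 2 * K * N ^+ 2 * Y + N ^+ 4 * Y) ->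
  N ^+ 2 * (Y + e / 2 * (S + N * e)) <= K * X.
Proof.
set CS := (N - 1) * _ => N_ge3 e_ge0 S_ge0 YS cs.
have NK_gt0 : 0 < (N - 1) * K by apply: mulr_gt0; nra.
have N_ge0 : [/\ 0 <= N, 0 <= N - 1 & 0 <= N + 1] by split; lra.
set Q := S ^+ 2 + K * (3 * N + 1) / 2 * (e * S) + K * (N - 2) * (N + 1) / 2 * e ^+ 2.
have key : (N - 1) * K * (K * X - N ^+ 2 * (Y + e / 2 * (S + N * e))) =
    (CS - (K * N * e + N ^+ 2 * S) ^+ 2)
    + (N - 1) * N ^+ 2 * (N + 1) * (S ^+ 2 - Y) + N ^+ 2 * Q by rewrite /CS /Q; field.
have cs_ge0 : 0 <= CS - (K * N * e + N ^+ 2 * S) ^+ 2 by rewrite subr_ge0.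
have YS_ge0 : 0 <= (N - 1) * N ^+ 2 * (N + 1) * (S ^+ 2 - Y).
  by case: N_ge0 => *; rewrite !mulr_ge0 // subr_ge0.
have Q_ge0 : 0 <= N ^+ 2 * Q.
  have K_ge0 : 0 <= K by nra.
  by rewrite mulr_ge0 ?sqr_ge0 // /Q !addr_ge0 ?sqr_ge0 // !mulr_ge0 ?sqr_ge0 //; lra.
by rewrite -subr_ge0 -(pmulr_rge0 _ NK_gt0) key; do 2 apply: addr_ge0 => //.
Qed.

End QuadraticBounds.

Section StarGap.
Variables (R : realFieldType) (m : nat) (a : R) (x : 'I_m -> R).
Local Notation N := (m%:R + 1).
Local Notation A := ((a + \sum_j x j) / N).
Local Notation K := (N ^+ 2 - N - 1).
Local Notation c b j := (Num.max (x j - b) 0).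

Lemma sumr_centered : \sum_j (x j - a) = N * (A - a).
Proof.
have N_neq0 : N != 0 :> R by rewrite natr1 pnatr_eq0.
rewrite sumrB sumr_const card_ord mulrBr [N * _]mulrC divfK // -mulr_natr; ring.
Qed.

Lemma star_gap_cauchy_schwarz (b : R) :
  (K * N * (A - a) - N ^+ 2 * \sum_j c b j) ^+ 2 <=
    m%:R * (K ^+ 2 * \sum_j (x j - a) ^+ 2
      - 2 * K * N ^+ 2 * (\sum_j c b j ^+ 2 + (b - a) * \sum_j c b j)
      + N ^+ 4 * \sum_j c b j ^+ 2).
Proof.
pose u j := x j - a; pose v j := K * u j - N ^+ 2 * c b j.
have uc j : u j * c b j = c b j ^+ 2 + (b - a) * c b j.
  by rewrite /u maxEle; case: leP => _; ring.
have <- : \sum_j v j = K * N * (A - a) - N ^+ 2 * \sum_j c b j.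
  by rewrite sumrB -!mulr_sumr sumr_centered; ring.
suff <- : \sum_j v j ^+ 2 = K ^+ 2 * \sum_j (x j - a) ^+ 2
    - 2 * K * N ^+ 2 * (\sum_j c b j ^+ 2 + (b - a) * \sum_j c b j)
    + N ^+ 4 * \sum_j c b j ^+ 2.
  exact: sqr_sumr_le.
transitivity (\sum_j (K ^+ 2 * u j ^+ 2 - 2 * K * N ^+ 2 * (c b j ^+ 2 + (b - a) * c b j)
    + N ^+ 4 * c b j ^+ 2)).
  by apply: eq_bigr => j _; rewrite -uc /v; ring.
by rewrite big_split sumrB /= -!mulr_sumr big_split /= -mulr_sumr.
Qed.

Lemma star_gap_le : (2 <= m)%N ->
  N ^+ 2 * \sum_j (leaf_max a A (x j) - Num.max a A) ^+ 2 <= K * \sum_j (x j - a) ^+ 2.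
Proof.
move=> m_ge2; have N_ge3 : 3 <= N :> R by rewrite natr1 (ler_nat R 3 m.+1).
set b := Num.max a A; have := star_gap_cauchy_schwarz b.
set X := \sum_j (x j - a) ^+ 2; set Y := \sum_j c b j ^+ 2; set S := \sum_j c b j => cs.
have c_ge0 j : 0 <= c b j by rewrite le_max lexx orbT.
have YS : Y <= S ^+ 2 by exact: sumr_sqr_le_sqr.
have [aA | Aa] := ltP a A.
- have b_eq : b = A by apply/max_idPr/ltW.
  have -> : \sum_j (leaf_max a A (x j) - b) ^+ 2 = Y.
    by apply: eq_bigr => j _; rewrite b_eq leaf_maxB_mean.
  apply: (star_quadratic_mean_gt (S := S) (d := A - a)); rewrite // addrK.
  by rewrite b_eq in cs.
- have b_eq : b = a by apply/max_idPl.
  have gap_le : \sum_j (leaf_max a A (x j) - a) ^+ 2 <= Y + (a - A) / 2 * (S + N * (a - A)).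
    have c_eq j : Num.max (x j - a) 0 = c b j by rewrite b_eq.
    apply: le_trans (ler_sum _ (fun j _ => leaf_maxB_center (x j) Aa)) _.
    under eq_bigr => j _ do rewrite c_eq.
    rewrite big_split /= -mulr_sumr sumrB sumr_centered -/Y -/S.
    by have -> : S - N * (A - a) = S + N * (a - A) by ring.
  rewrite b_eq; apply: le_trans (ler_wpM2l (sqr_ge0 _) gap_le) _.
  apply: star_quadratic_mean_le; rewrite ?subr_ge0 ?sumr_ge0 //.
  have -> : (K * N * (a - A) + N ^+ 2 * S) ^+ 2 = (K * N * (A - a) - N ^+ 2 * S) ^+ 2 by ring.
  by move: cs; rewrite addrK b_eq subrr mul0r addr0.
Qed.

End StarGap.

Section StarBound.
Variable R : realType.

Lemma sqrt_le_scaled (P Q K N : R) : 0 < N -> 0 <= K -> 0 <= Q ->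
  N ^+ 2 * P <= K * Q -> Num.sqrt P <= Num.sqrt K / N * Num.sqrt Q.
Proof.
move=> N_gt0 K_ge0 Q_ge0 NPKQ.
have -> : Num.sqrt K / N * Num.sqrt Q = Num.sqrt (K * Q / N ^+ 2).
  rewrite sqrtrM ?mulr_ge0 // sqrtrM // sqrtrV ?sqr_ge0 // sqrtr_sqr gtr0_norm //.
  by rewrite mulrAC.
rewrite ler_sqrt; last by rewrite divr_ge0 ?sqr_ge0 ?mulr_ge0.
by rewrite ler_pdivlMr ?exprn_gt0 // mulrC.
Qed.

Lemma Var2_maxfun_star_le m (f : 'I_m.+1 -> R) : (2 <= m)%N ->
  Var2 (star m.+1) (maxfun (star m.+1) f) <=
    Num.sqrt ((m%:R + 1) ^+ 2 - (m%:R + 1) - 1) / (m%:R + 1) * Var2 (star m.+1) f.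
Proof.
move=> m_ge2; rewrite !Var2_star.
under eq_bigr => j _ do rewrite maxfun_star_leaf maxfun_star_center.
set N := m%:R + 1; set K := N ^+ 2 - N - 1.
have m_ge2' : 2 <= m%:R :> R by rewrite (ler_nat R 2 m).
have gap : N ^+ 2 * \sum_j (leaf_max `|f ord0| (star_mean f) `|f (lift ord0 j)|
      - Num.max `|f ord0| (star_mean f)) ^+ 2 <=
    K * \sum_j (`|f (lift ord0 j)| - `|f ord0|) ^+ 2 := star_gap_le _ _ m_ge2.
have abs_le : \sum_j (`|f (lift ord0 j)| - `|f ord0|) ^+ 2 <=
    \sum_j (f (lift ord0 j) - f ord0) ^+ 2 by apply: ler_sum => j _; exact: sqr_normB_le.
have K_ge0 : 0 <= K by rewrite /K /N; nra.
apply: sqrt_le_scaled => //.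
- by rewrite /N; lra.
- by apply: sumr_ge0 => j _; exact: sqr_ge0.
- exact: le_trans gap (ler_wpM2l K_ge0 abs_le).
Qed.

Variable m : nat.
Local Notation N := (m.+1%:R + 1 : R).

Definition star_extremal : 'I_m.+2 -> R :=
  fun i => if val i == 0 then 1 else if val i == 1 then N else 0.

Lemma Var2_star_extremal : Var2 (star m.+2) star_extremal = Num.sqrt (N ^+ 2 - N - 1).
Proof.
rewrite Var2_star big_ord_recl /= (eq_bigr (fun=> 1)) => [|j _]; last first.
  by rewrite /star_extremal /= sub0r sqrrN expr1n.
by rewrite sumr_const card_ord /star_extremal /= -natr1; congr Num.sqrt; ring.
Qed.

Lemma Var2_maxfun_star_extremal :
  Var2 (star m.+2) (maxfun (star m.+2) star_extremal) = (N ^+ 2 - N - 1) / N.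
Proof.
have N_ge2 : 2 <= N by have := ler0n R m; rewrite -natr1; lra.
set A := (N + 1) / N.
have A_eq : star_mean star_extremal = A.
  rewrite /star_mean big_ord_recl big1 => [|j _]; last by rewrite normr0.
  by rewrite /star_extremal /= normr1 ger0_norm ?addr0 1?addrC //; lra.
have A_ge1 : 1 <= A by rewrite ler_pdivlMr; lra.
have A_le_half : A <= (N + 1) / 2 by rewrite /A ler_pdivrMr; nra.
have half_le_A : 1 / 2 <= A by lra.
have half_le_N : (N + 1) / 2 <= N by lra.
rewrite Var2_star big_ord_recl big1 => [|j _]; last first.
  rewrite !maxfun_star_leaf maxfun_star_center A_eq /leaf_max /star_extremal /=.
  rewrite normr0 normr1 add0r (max_idPr A_ge1) (max_idPr half_le_A) (max_idPr (le_trans ler01 A_ge1)).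
  by rewrite subrr expr0n.
rewrite addr0 maxfun_star_leaf maxfun_star_center A_eq /leaf_max /star_extremal /=.
rewrite normr1 ger0_norm ?(max_idPr A_ge1) ?(max_idPl A_le_half) ?(max_idPl half_le_N); last lra.
rewrite sqrtr_sqr ger0_norm; last by rewrite subr_ge0; lra.
by rewrite /A; field; apply/eqP; lra.
Qed.

End StarBound.

Theorem theorem4p2 (R : realType) (n : nat) (hn : (3 <= n)%N) :
  let C : R := Num.sqrt (((n - 1)%:R) ^+ 2 + (n - 2)%:R) / n%:R in
  (forall f : 'I_n -> R,
     Var2 (star n) (maxfun (star n) f) <= C * Var2 (star n) f) /\
  (forall c : R, c < C ->
     exists f : 'I_n -> R, c * Var2 (star n) f < Var2 (star n) (maxfun (star n) f)).
Proof.
case: n hn => [|[|[|k]]] // _ C.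
set N : R := k.+2%:R + 1.
have C_eq : C = Num.sqrt (N ^+ 2 - N - 1) / N.
  by rewrite /C /N subn1 subn2 /= -natr1; congr (Num.sqrt _ / _); rewrite -!natr1; ring.
split => [f | c].
  by rewrite C_eq; exact: Var2_maxfun_star_le.
rewrite C_eq => lt_cC; exists (@star_extremal R k.+1).
rewrite Var2_maxfun_star_extremal Var2_star_extremal -/N.
have K_gt0 : 0 < N ^+ 2 - N - 1 by have := ler0n R k; rewrite /N -!natr1; nra.
have -> : (N ^+ 2 - N - 1) / N = Num.sqrt (N ^+ 2 - N - 1) / N * Num.sqrt (N ^+ 2 - N - 1).
  by rewrite mulrAC -expr2 sqr_sqrtr // ltW.
by rewrite ltr_pM2r // sqrtr_gt0.
Qed.
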